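(* Let $\alpha:U\to V$ be a surjective transmission between commutative supertropical monoids, $M:=eU$, $N:=eV$, and $\gamma:=\alpha^\nu:M\to N$. (i) There exists a factorization $\alpha=\mu\circ\beta\circ\lambda$ with $\lambda$ an ideal compression of $U$, $\beta$ a strict ghost contraction, and $\mu$ a tangible fiber contraction over $N$. (ii) The factorization is essentially unique: if $\alpha=\mu'\circ\beta'\circ\lambda'$ is a second such factorization, then there exist isomorphisms of supertropical monoids $\rho$ over $M$ and $\sigma$ over $N$ such that $\lambda'=\rho\lambda$, $\mu'=\mu\sigma^{-1}$, $\beta'=\sigma\beta\rho^{-1}$. (iii) In particular one can choose $\lambda=\pi_{E(U,\mathfrak A)}:U\to\bar U:=U/E(U,\mathfrak A)$ with $\mathfrak A:=\mathfrak A_\alpha$ the ghost kernel of $\alpha$, $\beta=\pi_{F(\bar U,\gamma)}:\bar U\to W:=\bar U/F(\bar U,\gamma)$, and $\mu:W\to V$ the resulting tangible fiber contraction over $N$ with $\alpha=\mu\beta\lambda$.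
   Context: All monoids are commutative. A supertropical monoid is a monoid $(U,\cdot)$ with absorbing element $0$ and distinguished idempotent $e$ with $ex=0\Rightarrow x=0$, together with a total ordering on $M:=eU$, compatible with multiplication and with $0$ least, making $M$ a bipotent semiring (addition $=\max$). Tangible elements: $\mathcal T(U):=U\setminus eU$. A transmission $\alpha:U\to V$ is a map with $\alpha(0)=0$, $\alpha(1)=1$, $\alpha(xy)=\alpha(x)\alpha(y)$, $\alpha(e_U)=e_V$, and order-preserving on $eU$; its ghost part $\alpha^\nu:eU\to eV$ is its restriction; ghost kernel $\mathfrak A_\alpha:=\{x:\alpha(x)\in eV\}$, zero kernel $\mathfrak z_\alpha:=\alpha^{-1}(0)$. An isomorphism over $M$ is an isomorphism whose ghost part is the identity of $M$. A fiber contraction is a surjective transmission whose ghost part is an isomorphism; it is ''over $M$'' if $eV=eU=M$ and the ghost part is $\mathrm{id}_M$. An ideal compression is a fiber contraction over $M$ mapping $U\setminus\mathfrak A_\alpha$ bijectively onto $V\setminus N=\mathcal T(V)$. A transmission is tangible if $\alpha(\mathcal T(U))\subset\mathcal T(V)\cup\{0\}$. A ghost contraction is a transmission $\alpha$ whose ghost part maps $M$ onto $N$ and which maps $U\setminus(M\cup\mathfrak z_\alpha)$ bijectively onto $\mathcal T(V)$; it is strict if $\alpha^{-1}(0)\subset M$. For an equivalence relation $E$ on $U$ that is a TE-relation (multiplicative, order compatible on $M$, and $ex\sim_E0\Rightarrow x\sim_E0$), $U/E$ carries the unique supertropical monoid structure making $\pi_E:x\mapsto[x]_E$ a transmission. For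 an ideal $\mathfrak A\supseteq M$ of $U$, $E(U,\mathfrak A)$ is the TE-relation: $x\sim y$ iff $x=y$, or $x,y\in\mathfrak A$ and $ex=ey$; the ghost ideal of $U/E(U,\mathfrak A)$ is identified with $M$. For a surjective semiring homomorphism $\gamma:M\to N$, $F(U,\gamma)$ is the TE-relation: $x\sim y$ iff $x=y$, or $x,y\in M$ with $\gamma(x)=\gamma(y)$, or $\gamma(ex)=\gamma(ey)=0$; the ghost ideal of $U/F(U,\gamma)$ is identified with $N$. *)

Record STM := mkSTM {
  car :> Type;
  mul : car -> car -> car;
  one : car;
  zero : car;
  gh : car;
  le : car -> car -> Prop;
  mulA : forall x y z, mul x (mul y z) = mul (mul x y) z;
  mulC : forall x y, mul x y = mul y x;
  mul1x : forall x, mul one x = x;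
  mul0x : forall x, mul zero x = zero;
  gh_idem : mul gh gh = gh;
  gh_faithful : forall x, mul gh x = zero -> x = zero;
  le_refl : forall a, le (mul gh a) (mul gh a);
  le_antisym : forall a b, le (mul gh a) (mul gh b) -> le (mul gh b) (mul gh a) ->
                 mul gh a = mul gh b;
  le_trans : forall a b c, le (mul gh a) (mul gh b) -> le (mul gh b) (mul gh c) ->
                 le (mul gh a) (mul gh c);
  le_total : forall a b, le (mul gh a) (mul gh b) \/ le (mul gh b) (mul gh a);
  le_mul : forall a b c, le (mul gh a) (mul gh b) ->
                 le (mul (mul gh a) (mul gh c)) (mul (mul gh b) (mul gh c));
  le_0 : forall a, le zero (mul gh a)
}.

Arguments mul {s}.
Arguments one {s}.
Arguments zero {s}.
Arguments gh {s}.
Arguments le {s}.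

Section Defs.
Context {U V : STM}.

Definition ghost {X : STM} (x : X) : Prop := exists y, x = mul gh y.
Definition tangible {X : STM} (x : X) : Prop := ~ ghost x.

Definition surj {A B : Type} (f : A -> B) : Prop := forall b, exists a, f a = b.

Definition transmission (a : U -> V) : Prop :=
  a zero = zero /\ a one = one /\ (forall x y, a (mul x y) = mul (a x) (a y)) /\
  a gh = gh /\
  (forall x y, ghost x -> ghost y -> le x y -> le (a x) (a y)).

Definition ghost_kernel (a : U -> V) (x : U) : Prop := ghost (a x).
Definition zero_kernel (a : U -> V) (x : U) : Prop := a x = zero.

Definition ghost_part_iso (a : U -> V) : Prop :=
  (forall x y, ghost x -> ghost y -> a x = a y -> x = y) /\
  (forall w, ghost w -> exists x, ghost x /\ a x = w) /\
  (forall x y, ghost x -> ghost y -> le (a x) (a y) -> le x y).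

Definition fiber_contraction (a : U -> V) : Prop :=
  transmission a /\ surj a /\ ghost_part_iso a.

Definition ideal_compression (a : U -> V) : Prop :=
  fiber_contraction a /\
  (forall x y, ~ ghost_kernel a x -> ~ ghost_kernel a y -> a x = a y -> x = y) /\
  (forall x, ~ ghost_kernel a x -> tangible (a x)) /\
  (forall w, tangible w -> exists x, ~ ghost_kernel a x /\ a x = w).

Definition tangible_trans (a : U -> V) : Prop :=
  forall x, tangible x -> tangible (a x) \/ a x = zero.

Definition ghost_contraction (a : U -> V) : Prop :=
  transmission a /\
  (forall w, ghost w -> exists x, ghost x /\ a x = w) /\
  (forall x y, tangible x -> ~ zero_kernel a x -> tangible y -> ~ zero_kernel a y ->
      a x = a y -> x = y) /\
  (forall x, tangible x -> ~ zero_kernel a x -> tangible (a x)) /\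
  (forall w, tangible w -> exists x, tangible x /\ ~ zero_kernel a x /\ a x = w).

Definition strict_gc (a : U -> V) : Prop :=
  ghost_contraction a /\ (forall x, zero_kernel a x -> ghost x).

Definition E_rel (A : U -> Prop) (x y : U) : Prop :=
  x = y \/ (A x /\ A y /\ mul gh x = mul gh y).

(* the relation F(U, g), g only relevant on eU *)
Definition F_rel (g : U -> V) (x y : U) : Prop :=
  x = y \/ (ghost x /\ ghost y /\ g x = g y) \/
  (g (mul gh x) = zero /\ g (mul gh y) = zero).

Definition kernel_is {A B : Type} (f : A -> B) (R : A -> A -> Prop) : Prop :=
  forall x y, f x = f y <-> R x y.

End Defs.

Definition st_iso {U V : STM} (a : U -> V) (b : V -> U) : Prop :=
  transmission a /\ transmission b /\ (forall x, b (a x) = x) /\ (forall y, a (b y) = y).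

Definition is_factorization {U X W V : STM} (alpha : U -> V)
  (lam : U -> X) (bet : X -> W) (mu : W -> V) : Prop :=
  ideal_compression lam /\ strict_gc bet /\ fiber_contraction mu /\
  tangible_trans mu /\ (forall x, alpha x = mu (bet (lam x))).

(* In a factorization alpha = mu o beta o lambda, the maps lambda and beta o lambda are
   pinned down by alpha.  Strictness of beta and tangibility of mu force lambda u to be
   ghost exactly when alpha u is; hence lambda identifies u and v iff u = v or both lie in
   the ghost kernel A of alpha with eu = ev, and beta o lambda identifies them iff u = v or
   both lie in A with alpha u = alpha v.  Since lambda and mu are bijective on ghosts, the
   orders on the ghost images are read off from eU and eV.  So the lambda's and the
   (beta o lambda)'s of two factorizations have equal kernels and orders, which yields the
   isomorphisms rho and sigma.  Conversely, both relations are TE-relations, and the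
   quotients of U by them (the second one taken directly on U rather than on U/E(U,A)),
   with the induced maps, form a factorization of the required kind. *)

From Stdlib Require Import Classical ClassicalEpsilon ProofIrrelevance
  FunctionalExtensionality PropExtensionality.

Section Basics.
Context {X : STM}.

Lemma gh_zero : mul gh (@zero X) = zero.
Proof. rewrite mulC. apply mul0x. Qed.

Lemma ghost_zero : ghost (@zero X).
Proof. exists zero. now rewrite gh_zero. Qed.

Lemma gh_ghK (x : X) : mul gh (mul gh x) = mul gh x.
Proof. now rewrite mulA, gh_idem. Qed.

Lemma gh_mul (x y : X) : mul gh (mul x y) = mul (mul gh x) (mul gh y).
Proof. now rewrite !mulA, (mulC _ (mul gh x) gh), gh_ghK. Qed.

Lemma ghost_gh (x : X) : ghost (mul gh x).
Proof. now exists x. Qed.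

Lemma ghost_ghK (x : X) : ghost x -> mul gh x = x.
Proof. intros [y ->]. apply gh_ghK. Qed.

End Basics.

Section Transmissions.
Context {U V : STM} (a : U -> V).

Lemma transmission_gh x : transmission a -> a (mul gh x) = mul gh (a x).
Proof. intros (_ & _ & a_mul & a_gh & _). now rewrite a_mul, a_gh. Qed.

Lemma transmission_ghost x : transmission a -> ghost x -> ghost (a x).
Proof. intros Ta [y ->]. rewrite transmission_gh by exact Ta. apply ghost_gh. Qed.

Lemma fiber_contraction_zero x : fiber_contraction a -> a x = zero -> x = zero.
Proof.
  intros (Ta & _ & a_inj & _) ax0. apply gh_faithful, a_inj.
  - apply ghost_gh.
  - apply ghost_zero.
  - rewrite transmission_gh, ax0, gh_zero by exact Ta. symmetry. apply Ta.
Qed.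

Lemma fiber_contraction_le x y : fiber_contraction a -> ghost x -> ghost y ->
  (le (a x) (a y) <-> le x y).
Proof.
  intros (Ta & _ & _ & _ & a_refl) Gx Gy. split.
  - now apply a_refl.
  - now apply Ta.
Qed.

End Transmissions.

Lemma transmission_comp {U V W : STM} (a : U -> V) (b : V -> W) :
  transmission a -> transmission b -> transmission (fun x => b (a x)).
Proof.
  intros Ta Tb. pose proof Ta as (a0 & a1 & a_mul & a_gh & a_le).
  destruct Tb as (b0 & b1 & b_mul & b_gh & b_le).
  repeat split; intros; rewrite ?a0, ?a1, ?a_mul, ?a_gh; auto.
  apply b_le; auto using transmission_ghost.
Qed.

Lemma factor_through_surj {U X X' : Type} (f : U -> X) (f' : U -> X') :
  surj f -> (forall u v, f u = f v -> f' u = f' v) ->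
  {h : X -> X' | forall u, h (f u) = f' u}.
Proof.
  intros Sf f_ker.
  exists (fun c => f' (proj1_sig (constructive_indefinite_description _ (Sf c)))).
  intros u. destruct (constructive_indefinite_description _ (Sf (f u))) as [v fv].
  now apply f_ker.
Qed.

Lemma induced_transmission {U X X' : STM} (f : U -> X) (f' : U -> X') (h : X -> X') :
  transmission f -> surj f -> transmission f' -> (forall u, h (f u) = f' u) ->
  (forall c d, ghost c -> ghost d -> le c d -> le (h c) (h d)) -> transmission h.
Proof.
  intros (f0 & f1 & f_mul & f_gh & _) Sf (f'0 & f'1 & f'_mul & f'_gh & _) hf h_le.
  repeat split; auto.
  - now rewrite <- f0, hf.
  - now rewrite <- f1, hf.
  - intros c d. destruct (Sf c) as [u <-], (Sf d) as [v <-].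
    now rewrite <- f_mul, !hf.
  - now rewrite <- f_gh, hf.
Qed.

(* [E_rel A] is [ideal_rel (mul gh) A]. *)
Definition ideal_rel {U Y : STM} (g : U -> Y) (A : U -> Prop) (x y : U) : Prop :=
  x = y \/ (A x /\ A y /\ g x = g y).

Section IdealRel.
Context {U Y : STM} (g : U -> Y) (A : U -> Prop).

Lemma ideal_rel_refl x : ideal_rel g A x x.
Proof. now left. Qed.

Lemma ideal_rel_sym x y : ideal_rel g A x y -> ideal_rel g A y x.
Proof. intros [-> | (Ax & Ay & gxy)]; [now left | right; auto]. Qed.

Lemma ideal_rel_trans x y z :
  ideal_rel g A x y -> ideal_rel g A y z -> ideal_rel g A x z.
Proof.
  intros [<- | (Ax & Ay & gxy)] Ryz; [exact Ryz |].
  destruct Ryz as [<- | (_ & Az & gyz)]; right; repeat split; congruence.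
Qed.

Lemma ideal_rel_map x y : ideal_rel g A x y -> g x = g y.
Proof. intros [-> | (_ & _ & gxy)]; auto. Qed.

End IdealRel.

Section IdealCongruence.
Context {U : STM}.

(* Data making [ideal_rel ic_map ic_ideal] a TE-relation; the order of the quotient is
   pulled back from [ic_target] along [ic_map]. *)
Record ideal_congruence := {
  ic_target : STM;
  ic_map : U -> ic_target;
  ic_ideal : U -> Prop;
  ic_map_mul : forall x y, ic_map (mul x y) = mul (ic_map x) (ic_map y);
  ic_map_zero : ic_map zero = zero;
  ic_map_gh : ic_map gh = gh;
  ic_ideal_ghost : forall x, ghost x -> ic_ideal x;
  ic_ideal_mul : forall x y, ic_ideal x -> ic_ideal (mul x y);
  ic_ideal_gh : forall x, ic_ideal x -> ic_map (mul gh x) = ic_map x;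
  ic_ideal_zero : forall x, ic_map x = zero -> ic_ideal x
}.

End IdealCongruence.
Arguments ideal_congruence : clear implicits.

Section Quotient.
Context {U : STM} (c : ideal_congruence U).

Local Notation g := (ic_map c).
Local Notation A := (ic_ideal c).
Local Notation rel := (ideal_rel (ic_map c) (ic_ideal c)).

Lemma rel_mul x y z : rel x y -> rel (mul x z) (mul y z).
Proof.
  intros [-> | (Ax & Ay & gxy)]; [now left |].
  right. repeat split; try now apply ic_ideal_mul.
  now rewrite !ic_map_mul, gxy.
Qed.

Definition qcar : Type := {P : U -> Prop | exists x, P = rel x}.

Definition cls (x : U) : qcar := exist _ (rel x) (ex_intro _ x eq_refl).

Lemma cls_eq x y : cls x = cls y <-> rel x y.
Proof.
  split.
  - intros E. apply (f_equal (fun P => proj1_sig P y)) in E. simpl in E.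
    rewrite E. apply ideal_rel_refl.
  - intros Rxy. apply subset_eq_compat, functional_extensionality. intros z.
    apply propositional_extensionality. split.
    + now apply ideal_rel_trans, ideal_rel_sym.
    + now apply ideal_rel_trans.
Qed.

Definition rep (p : qcar) : U :=
  proj1_sig (constructive_indefinite_description _ (proj2_sig p)).

Lemma cls_rep p : cls (rep p) = p.
Proof.
  destruct p as [P HP]. unfold rep. simpl.
  destruct (constructive_indefinite_description _ HP) as [x ->].
  now apply subset_eq_compat.
Qed.

Lemma rel_rep x : rel (rep (cls x)) x.
Proof. apply cls_eq, cls_rep. Qed.

Lemma cls_surj : surj cls.
Proof. intros p. exists (rep p). apply cls_rep. Qed.

Definition qmul (p q : qcar) : qcar := cls (mul (rep p) (rep q)).

Lemma qmul_cls x y : qmul (cls x) (cls y) = cls (mul x y).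
Proof.
  apply cls_eq. eapply ideal_rel_trans; [apply rel_mul, rel_rep |].
  rewrite (mulC _ x), (mulC _ x). apply rel_mul, rel_rep.
Qed.

Definition qmap (p : qcar) : ic_target c := g (rep p).

Lemma qmap_cls x : qmap (cls x) = g x.
Proof. apply (ideal_rel_map _ _ _ _ (rel_rep x)). Qed.

Definition qle (p q : qcar) : Prop := le (qmap p) (qmap q).

Lemma qmap_gh x : qmap (qmul (cls gh) (cls x)) = mul gh (g x).
Proof. now rewrite qmul_cls, qmap_cls, ic_map_mul, ic_map_gh. Qed.

Ltac elim_cls p := destruct (cls_surj p) as [?x <-].

Lemma qmulA p q r : qmul p (qmul q r) = qmul (qmul p q) r.
Proof. elim_cls p. elim_cls q. elim_cls r. now rewrite !qmul_cls, mulA. Qed.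

Lemma qmulC p q : qmul p q = qmul q p.
Proof. elim_cls p. elim_cls q. now rewrite !qmul_cls, mulC. Qed.

Lemma qmul1x p : qmul (cls one) p = p.
Proof. elim_cls p. now rewrite qmul_cls, mul1x. Qed.

Lemma qmul0x p : qmul (cls zero) p = cls zero.
Proof. elim_cls p. now rewrite qmul_cls, mul0x. Qed.

Lemma qgh_idem : qmul (cls gh) (cls gh) = cls gh.
Proof. now rewrite qmul_cls, gh_idem. Qed.

Lemma qgh_faithful p : qmul (cls gh) p = cls zero -> p = cls zero.
Proof.
  elim_cls p. rewrite qmul_cls, !cls_eq. intros [E | (_ & _ & gE)].
  - left. now apply gh_faithful.
  - rewrite ic_map_mul, ic_map_gh, ic_map_zero in gE. apply gh_faithful in gE.
    right. repeat split.
    + now apply ic_ideal_zero.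
    + apply ic_ideal_ghost, ghost_zero.
    + now rewrite gE, ic_map_zero.
Qed.

Lemma qle_refl p : qle (qmul (cls gh) p) (qmul (cls gh) p).
Proof. elim_cls p. unfold qle. rewrite qmap_gh. apply le_refl. Qed.

Lemma qle_antisym p q : qle (qmul (cls gh) p) (qmul (cls gh) q) ->
  qle (qmul (cls gh) q) (qmul (cls gh) p) -> qmul (cls gh) p = qmul (cls gh) q.
Proof.
  elim_cls p. elim_cls q. unfold qle. rewrite !qmap_gh. intros Hpq Hqp.
  rewrite !qmul_cls. apply cls_eq. right. repeat split; try apply ic_ideal_ghost, ghost_gh.
  rewrite !ic_map_mul, ic_map_gh. now apply le_antisym.
Qed.

Lemma qle_trans p q r : qle (qmul (cls gh) p) (qmul (cls gh) q) ->
  qle (qmul (cls gh) q) (qmul (cls gh) r) -> qle (qmul (cls gh) p) (qmul (cls gh) r).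
Proof. elim_cls p. elim_cls q. elim_cls r. unfold qle. rewrite !qmap_gh. apply le_trans. Qed.

Lemma qle_total p q :
  qle (qmul (cls gh) p) (qmul (cls gh) q) \/ qle (qmul (cls gh) q) (qmul (cls gh) p).
Proof. elim_cls p. elim_cls q. unfold qle. rewrite !qmap_gh. apply le_total. Qed.

Lemma qle_mul p q r : qle (qmul (cls gh) p) (qmul (cls gh) q) ->
  qle (qmul (qmul (cls gh) p) (qmul (cls gh) r)) (qmul (qmul (cls gh) q) (qmul (cls gh) r)).
Proof.
  elim_cls p. elim_cls q. elim_cls r. unfold qle.
  rewrite !qmul_cls, !qmap_cls, !ic_map_mul, !ic_map_gh. apply le_mul.
Qed.

Lemma qle_0 p : qle (cls zero) (qmul (cls gh) p).
Proof. elim_cls p. unfold qle. rewrite qmap_gh, qmap_cls, ic_map_zero. apply le_0. Qed.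

Definition quotient : STM :=
  mkSTM qcar qmul (cls one) (cls zero) (cls gh) qle qmulA qmulC qmul1x qmul0x
    qgh_idem qgh_faithful qle_refl qle_antisym qle_trans qle_total qle_mul qle_0.

Definition quot_class : U -> quotient := cls.
Definition quot_map : quotient -> ic_target c := qmap.

Lemma quot_class_eq x y : quot_class x = quot_class y <-> rel x y.
Proof. apply cls_eq. Qed.

Lemma quot_class_surj : surj quot_class.
Proof. apply cls_surj. Qed.

Lemma quot_class_mul x y : quot_class (mul x y) = mul (quot_class x) (quot_class y).
Proof. symmetry. apply qmul_cls. Qed.

Lemma quot_map_class x : quot_map (quot_class x) = g x.
Proof. apply qmap_cls. Qed.

Lemma quot_le_class x y : le (quot_class x) (quot_class y) <-> le (g x) (g y).
Proof. simpl. unfold qle. now rewrite !qmap_cls. Qed.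

Lemma quot_ghost_class x : ghost (quot_class x) <-> A x.
Proof.
  split.
  - intros [p E]. destruct (cls_surj p) as [u <-].
    change (cls x = qmul (cls gh) (cls u)) in E. rewrite qmul_cls, cls_eq in E.
    destruct E as [-> | (Ax & _)]; [apply ic_ideal_ghost, ghost_gh | exact Ax].
  - intros Ax. exists (cls x). change (cls x = qmul (cls gh) (cls x)).
    rewrite qmul_cls. apply cls_eq. right. repeat split; auto.
    + apply ic_ideal_ghost, ghost_gh.
    + now rewrite ic_ideal_gh.
Qed.

Lemma quot_class_transmission :
  (forall x y, ghost x -> ghost y -> le x y -> le (g x) (g y)) -> transmission quot_class.
Proof.
  intros g_le. repeat split.
  - apply quot_class_mul.
  - intros x y Gx Gy Hxy. apply quot_le_class. now apply g_le.
Qed.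

Lemma quot_map_transmission : g one = one -> transmission quot_map.
Proof.
  intros g1. repeat split.
  - rewrite <- (ic_map_zero c). exact (quot_map_class zero).
  - rewrite <- g1. exact (quot_map_class one).
  - intros p q. destruct (quot_class_surj p) as [x <-], (quot_class_surj q) as [y <-].
    now rewrite <- quot_class_mul, !quot_map_class, ic_map_mul.
  - rewrite <- (ic_map_gh c). exact (quot_map_class gh).
  - now intros p q _ _.
Qed.

End Quotient.

Arguments quot_class {U} c.
Arguments quot_map {U} c.

Section Factorization.
Context {U V X W : STM} {alpha : U -> V} {lam : U -> X} {bet : X -> W} {mu : W -> V}.
Hypothesis fact : is_factorization alpha lam bet mu.

Lemma factor_lam_transmission : transmission lam.
Proof. apply fact. Qed.

Lemma factor_lam_surj : surj lam.
Proof. apply fact. Qed.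

Lemma factor_comp u : alpha u = mu (bet (lam u)).
Proof. apply fact. Qed.

(* A tangible [lam u] is not killed by the strict [bet], so [bet] and then [mu] keep it
   tangible. *)
Lemma factor_ghost_lam u : ghost (lam u) <-> ghost (alpha u).
Proof.
  destruct fact as ((FCl & _) & ((Tb & _ & _ & b_tang & _) & b_strict) & FCm & m_tang & a_eq).
  rewrite a_eq. split.
  - intros G. apply (transmission_ghost _ _ (proj1 FCm)), (transmission_ghost _ _ Tb), G.
  - intros G. apply NNPP. intros NG.
    assert (nz : ~ zero_kernel bet (lam u)) by (intros Z; now apply NG, b_strict).
    destruct (m_tang _ (b_tang _ NG nz)) as [T | Z].
    + contradiction.
    + exact (nz (fiber_contraction_zero _ _ FCm Z)).
Qed.

Lemma factor_ghost u : ghost (bet (lam u)) <-> ghost (alpha u).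
Proof.
  destruct fact as (_ & ((Tb & _) & _) & (Tm & _) & _ & a_eq). split.
  - intros G. rewrite a_eq. now apply transmission_ghost.
  - intros G. now apply transmission_ghost, factor_ghost_lam.
Qed.

Lemma factor_lam_eq u v : lam u = lam v <-> E_rel (ghost_kernel alpha) u v.
Proof.
  destruct fact as (((Tl & _ & l_inj & _) & lt_inj & _) & _).
  unfold ghost_kernel. split.
  - intros E. destruct (classic (ghost (alpha u))) as [Gu | NGu].
    + assert (Gv : ghost (alpha v))
        by (apply factor_ghost_lam; rewrite <- E; now apply factor_ghost_lam).
      right. repeat split; auto. apply l_inj; try apply ghost_gh.
      now rewrite !transmission_gh, E by exact Tl.
    + left. apply lt_inj; unfold ghost_kernel; [| rewrite <- E |]; rewrite ?factor_ghost_lam; auto.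
  - intros [-> | (Gu & Gv & E)]; auto.
    rewrite <- (ghost_ghK (lam u)), <- (ghost_ghK (lam v)) by (apply factor_ghost_lam; auto).
    now rewrite <- !transmission_gh, E by exact Tl.
Qed.

Lemma factor_eq u v :
  bet (lam u) = bet (lam v) <-> ideal_rel alpha (ghost_kernel alpha) u v.
Proof.
  destruct fact as (_ & ((_ & _ & b_inj & _) & b_strict) & (_ & _ & m_inj & _) & _ & a_eq).
  unfold ghost_kernel. split.
  - intros E. destruct (classic (ghost (alpha u))) as [Gu | NGu].
    + assert (Gv : ghost (alpha v)) by (apply factor_ghost; rewrite <- E; now apply factor_ghost).
      right. repeat split; auto. now rewrite !a_eq, E.
    + assert (NGv : ~ ghost (alpha v)) by (rewrite <- factor_ghost, <- E, factor_ghost; exact NGu).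
      assert (T : forall w, ~ ghost (alpha w) -> tangible (lam w) /\ ~ zero_kernel bet (lam w)).
      { intros w NGw. rewrite <- factor_ghost_lam in NGw. split; [exact NGw |].
        intros Z. now apply NGw, b_strict. }
      destruct (T u NGu), (T v NGv).
      assert (El : lam u = lam v) by (apply b_inj; auto).
      apply factor_lam_eq in El. destruct El as [El | (Gu & _)]; [now left | contradiction].
  - intros [-> | (Gu & Gv & E)]; auto.
    apply m_inj; try now apply factor_ghost. now rewrite <- !a_eq.
Qed.

Lemma factor_lam_le u v : ghost (lam u) -> ghost (lam v) ->
  (le (lam u) (lam v) <-> le (mul gh u) (mul gh v)).
Proof.
  destruct fact as ((FCl & _) & _). intros Gu Gv.
  rewrite <- (ghost_ghK (lam u)), <- (ghost_ghK (lam v)), <- !transmission_gh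
    by (apply FCl || auto).
  apply fiber_contraction_le; auto using ghost_gh.
Qed.

Lemma factor_le u v : ghost (bet (lam u)) -> ghost (bet (lam v)) ->
  (le (bet (lam u)) (bet (lam v)) <-> le (alpha u) (alpha v)).
Proof.
  destruct fact as (_ & _ & FCm & _ & a_eq). intros Gu Gv.
  rewrite !a_eq. symmetry. now apply fiber_contraction_le.
Qed.

Lemma factor_surj : surj (fun u => bet (lam u)).
Proof.
  destruct fact as ((FCl & _) & ((_ & b_gsurj & _ & _ & b_tsurj) & _) & _).
  intros w. assert (Hx : exists x, bet x = w).
  { destruct (classic (ghost w)) as [G | NG].
    - destruct (b_gsurj w G) as (x & _ & <-). now exists x.
    - destruct (b_tsurj w NG) as (x & _ & _ & <-). now exists x. }
  destruct Hx as [x <-]. destruct (factor_lam_surj x) as [u <-]. now exists u.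
Qed.

Lemma factor_transmission : transmission (fun u => bet (lam u)).
Proof. apply transmission_comp; [exact factor_lam_transmission | apply fact]. Qed.

End Factorization.

Section SameKernel.
Context {U X X' : STM} (f : U -> X) (f' : U -> X').
Hypotheses (Tf : transmission f) (Sf : surj f) (Tf' : transmission f') (Sf' : surj f').
Hypothesis same_kernel : forall u v, f u = f v <-> f' u = f' v.
Hypothesis same_ghost : forall u, ghost (f u) <-> ghost (f' u).
Hypothesis same_le : forall u v, ghost (f u) -> ghost (f v) ->
  (le (f u) (f v) <-> le (f' u) (f' v)).

Lemma st_iso_of_same_kernel : exists (h : X -> X') (h' : X' -> X),
  st_iso h h' /\ (forall u, h (f u) = f' u) /\ (forall u, h' (f' u) = f u).
Proof.
  destruct (factor_through_surj f f' Sf (fun u v => proj1 (same_kernel u v))) as [h hf].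
  destruct (factor_through_surj f' f Sf' (fun u v => proj2 (same_kernel u v))) as [h' hf'].
  exists h, h'. split; [split; [| split; [| split]] | now split].
  - apply (induced_transmission f f'); auto.
    intros c d Gc Gd. destruct (Sf c) as [u <-], (Sf d) as [v <-].
    rewrite !hf. now apply same_le.
  - apply (induced_transmission f' f); auto.
    intros c d Gc Gd. destruct (Sf' c) as [u <-], (Sf' d) as [v <-].
    rewrite !hf'. apply same_le; now apply same_ghost.
  - intros c. destruct (Sf c) as [u <-]. now rewrite hf, hf'.
  - intros c. destruct (Sf' c) as [u <-]. now rewrite hf', hf.
Qed.

End SameKernel.

Lemma factorization_unique {U V X W X' W' : STM} (alpha : U -> V)
  (lam : U -> X) (bet : X -> W) (mu : W -> V)
  (lam' : U -> X') (bet' : X' -> W') (mu' : W' -> V) :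
  is_factorization alpha lam bet mu -> is_factorization alpha lam' bet' mu' ->
  exists (rho : X -> X') (rhoinv : X' -> X) (sig : W -> W') (siginv : W' -> W),
    st_iso rho rhoinv /\ st_iso sig siginv /\
    (forall u : U, ghost u -> rho (lam u) = lam' u) /\
    (forall w : W, ghost w -> mu' (sig w) = mu w) /\
    (forall x, lam' x = rho (lam x)) /\
    (forall w', mu' w' = mu (siginv w')) /\
    (forall x', bet' x' = sig (bet (rhoinv x'))).
Proof.
  intros fa fb.
  destruct (st_iso_of_same_kernel lam lam' (factor_lam_transmission fa) (factor_lam_surj fa)
      (factor_lam_transmission fb) (factor_lam_surj fb))
    as (rho & rhoinv & Irho & rho_lam & rhoinv_lam).
  { intros u v. now rewrite (factor_lam_eq fa), (factor_lam_eq fb). }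
  { intros u. now rewrite (factor_ghost_lam fa), (factor_ghost_lam fb). }
  { intros u v Gu Gv. rewrite (factor_lam_le fa), (factor_lam_le fb); try easy;
      apply (factor_ghost_lam fb); apply (factor_ghost_lam fa); assumption. }
  destruct (st_iso_of_same_kernel (fun u => bet (lam u)) (fun u => bet' (lam' u))
      (factor_transmission fa) (factor_surj fa) (factor_transmission fb) (factor_surj fb))
    as (sig & siginv & Isig & sig_bl & siginv_bl).
  { intros u v. now rewrite (factor_eq fa), (factor_eq fb). }
  { intros u. now rewrite (factor_ghost fa), (factor_ghost fb). }
  { intros u v Gu Gv. rewrite (factor_le fa), (factor_le fb); try easy;
      apply (factor_ghost fb); apply (factor_ghost fa); assumption. }
  exists rho, rhoinv, sig, siginv.
  split; [exact Irho | split; [exact Isig | split; [auto | split; [| split; [auto | split]]]]].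
  - intros w _. destruct (factor_surj fa w) as [u <-].
    now rewrite sig_bl, <- (factor_comp fa), <- (factor_comp fb).
  - intros w. destruct (factor_surj fb w) as [u <-].
    now rewrite siginv_bl, <- (factor_comp fa), <- (factor_comp fb).
  - intros x. destruct (factor_lam_surj fb x) as [u <-].
    now rewrite rhoinv_lam, sig_bl.
Qed.

Section Canonical.
Context {U V : STM} (alpha : U -> V).
Hypotheses (Ta : transmission alpha) (Sa : surj alpha).

Local Notation A := (ghost_kernel alpha).

Lemma ghost_kernel_ghost x : ghost x -> A x.
Proof. now apply transmission_ghost. Qed.

Lemma ghost_kernel_mul x y : A x -> A (mul x y).
Proof.
  unfold ghost_kernel. destruct Ta as (_ & _ & a_mul & _). rewrite a_mul.
  intros [z ->]. exists (mul z (alpha y)). now rewrite mulA.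
Qed.

Lemma ghost_kernel_gh x : A x -> alpha (mul gh x) = alpha x.
Proof. intros Ax. now rewrite transmission_gh, ghost_ghK. Qed.

Lemma ghost_kernel_zero x : alpha x = zero -> A x.
Proof. unfold ghost_kernel. intros ->. apply ghost_zero. Qed.

Lemma ghost_kernel_gh_zero x : mul gh x = zero -> A x.
Proof. intros Z. apply gh_faithful in Z. subst. apply ghost_kernel_ghost, ghost_zero. Qed.

Definition E_congruence : ideal_congruence U := {|
  ic_map := mul gh; ic_ideal := A;
  ic_map_mul := gh_mul; ic_map_zero := gh_zero; ic_map_gh := gh_idem U;
  ic_ideal_ghost := ghost_kernel_ghost; ic_ideal_mul := ghost_kernel_mul;
  ic_ideal_gh := fun x _ => gh_ghK x; ic_ideal_zero := ghost_kernel_gh_zero |}.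

Definition K_congruence : ideal_congruence U := {|
  ic_map := alpha; ic_ideal := A;
  ic_map_mul := proj1 (proj2 (proj2 Ta)); ic_map_zero := proj1 Ta;
  ic_map_gh := proj1 (proj2 (proj2 (proj2 Ta)));
  ic_ideal_ghost := ghost_kernel_ghost; ic_ideal_mul := ghost_kernel_mul;
  ic_ideal_gh := ghost_kernel_gh; ic_ideal_zero := ghost_kernel_zero |}.

Definition Ubar : STM := quotient E_congruence.
(* U / F(Ubar, gamma), realised directly as a quotient of U. *)
Definition Wbar : STM := quotient K_congruence.

Local Notation lam_can := (quot_class E_congruence).
Local Notation pi_can := (quot_class K_congruence).
Local Notation mu_can := (quot_map K_congruence).

Lemma lam_can_eq_pi_can_eq x y : lam_can x = lam_can y -> pi_can x = pi_can y.
Proof.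
  intros E. apply quot_class_eq in E. apply quot_class_eq.
  destruct E as [-> | (Ax & Ay & E)]; [now left |].
  right. repeat split; auto. simpl in *. now rewrite <- ghost_kernel_gh, E, ghost_kernel_gh.
Qed.

Definition bet_can : Ubar -> Wbar :=
  proj1_sig (factor_through_surj lam_can pi_can (quot_class_surj _) lam_can_eq_pi_can_eq).

Lemma bet_can_lam_can x : bet_can (lam_can x) = pi_can x.
Proof. exact (proj2_sig (factor_through_surj _ _ _ _) x). Qed.

Lemma mu_can_pi_can x : mu_can (pi_can x) = alpha x.
Proof. apply (quot_map_class K_congruence). Qed.

Lemma ghost_lam_can x : ghost (lam_can x) <-> A x.
Proof. apply (quot_ghost_class E_congruence). Qed.

Lemma ghost_pi_can x : ghost (pi_can x) <-> A x.
Proof. apply (quot_ghost_class K_congruence). Qed.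

Ltac elim_lam_can p x := destruct (quot_class_surj E_congruence p) as [x <-].
Ltac elim_pi_can p x := destruct (quot_class_surj K_congruence p) as [x <-].

Lemma lam_can_ideal_compression : ideal_compression lam_can.
Proof.
  assert (lam_can_gh : forall x, A x -> lam_can (mul gh x) = lam_can x).
  { intros x Ax. apply quot_class_eq. right. repeat split; auto using ghost_kernel_mul.
    - apply ghost_kernel_ghost, ghost_gh.
    - apply gh_ghK. }
  split; [split; [| split; [apply quot_class_surj | split; [| split]]] | split; [| split]].
  - apply quot_class_transmission. intros x y Gx Gy. simpl. now rewrite !ghost_ghK.
  - intros x y Gx Gy E. apply quot_class_eq in E.
    destruct E as [-> | (_ & _ & E)]; [easy | now rewrite <- (ghost_ghK x), <- (ghost_ghK y)].
  - intros w Gw. elim_lam_can w x. apply ghost_lam_can in Gw.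
    exists (mul gh x). split; [apply ghost_gh | auto].
  - intros x y Gx Gy Hle. apply (proj1 (quot_le_class E_congruence x y)) in Hle. simpl in Hle.
    now rewrite <- (ghost_ghK x), <- (ghost_ghK y).
  - intros x y NGx _ E. apply quot_class_eq in E.
    destruct E as [-> | (Ax & _)]; [easy | now exfalso; apply NGx, ghost_lam_can].
  - now intros x.
  - intros w Tw. elim_lam_can w x. now exists x.
Qed.

Lemma pi_can_transmission : transmission pi_can.
Proof. apply quot_class_transmission, Ta. Qed.

Lemma bet_can_transmission : transmission bet_can.
Proof.
  apply (induced_transmission lam_can pi_can); try apply quot_class_surj.
  - apply lam_can_ideal_compression.
  - exact pi_can_transmission.
  - exact bet_can_lam_can.
  - intros c d Gc Gd Hle. elim_lam_can c x. elim_lam_can d y. rewrite !bet_can_lam_can.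
    apply (proj1 (quot_le_class E_congruence _ _)) in Hle. apply quot_le_class. simpl in *.
    apply ghost_lam_can in Gc. apply ghost_lam_can in Gd.
    rewrite <- (ghost_kernel_gh x), <- (ghost_kernel_gh y) by assumption.
    apply Ta; auto using ghost_gh.
Qed.

Lemma bet_can_strict_gc : strict_gc bet_can.
Proof.
  unfold strict_gc, ghost_contraction, tangible, zero_kernel.
  split; [split; [exact bet_can_transmission | split; [| split; [| split]]] |].
  - intros w Gw. elim_pi_can w x. exists (lam_can x). rewrite bet_can_lam_can, ghost_lam_can.
    split; [apply ghost_pi_can, Gw | reflexivity].
  - intros c d NGc _ NGd _. elim_lam_can c x. elim_lam_can d y. rewrite !bet_can_lam_can.
    intros E. apply quot_class_eq in E.
    destruct E as [-> | (Ax & _)]; [easy | now exfalso; apply NGc, ghost_lam_can].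
  - intros c NGc _. elim_lam_can c x.
    rewrite bet_can_lam_can, ghost_pi_can, <- ghost_lam_can. exact NGc.
  - intros w NGw. elim_pi_can w x. exists (lam_can x).
    rewrite bet_can_lam_can, ghost_lam_can, <- ghost_pi_can.
    repeat split; auto. intros Z. apply NGw. rewrite Z. apply ghost_zero.
  - intros c Z. elim_lam_can c x. rewrite bet_can_lam_can in Z.
    apply (quot_class_eq K_congruence x zero) in Z. apply ghost_lam_can.
    destruct Z as [-> | (Ax & _)]; [apply ghost_kernel_ghost, ghost_zero | exact Ax].
Qed.

Lemma mu_can_fiber_contraction : fiber_contraction mu_can.
Proof.
  split; [| split; [| split; [| split]]].
  - apply quot_map_transmission, Ta.
  - intros v. destruct (Sa v) as [u <-]. exists (pi_can u). apply mu_can_pi_can.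
  - intros p q Gp Gq. elim_pi_can p x. elim_pi_can q y. rewrite !mu_can_pi_can. intros E.
    apply ghost_pi_can in Gp. apply ghost_pi_can in Gq. apply quot_class_eq. right. auto.
  - intros w [w' ->]. destruct (Sa w') as [u <-]. exists (pi_can (mul gh u)).
    rewrite ghost_pi_can, mu_can_pi_can, transmission_gh by exact Ta.
    split; [apply ghost_kernel_ghost, ghost_gh | reflexivity].
  - intros p q _ _. elim_pi_can p x. elim_pi_can q y. rewrite !mu_can_pi_can.
    apply (proj2 (quot_le_class K_congruence _ _)).
Qed.

Lemma mu_can_tangible : tangible_trans mu_can.
Proof.
  intros p Tp. elim_pi_can p x. left. unfold tangible in *.
  rewrite mu_can_pi_can. now rewrite ghost_pi_can in Tp.
Qed.

Lemma canonical_factorization : is_factorization alpha lam_can bet_can mu_can.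
Proof.
  split; [exact lam_can_ideal_compression | split; [exact bet_can_strict_gc |]].
  split; [exact mu_can_fiber_contraction | split; [exact mu_can_tangible |]].
  intros x. now rewrite bet_can_lam_can, mu_can_pi_can.
Qed.

Lemma bet_can_surj : surj bet_can.
Proof. intros w. elim_pi_can w x. exists (lam_can x). apply bet_can_lam_can. Qed.

Lemma bet_can_kernel : kernel_is bet_can (F_rel (fun c => mu_can (bet_can c))).
Proof.
  assert (gh_lam : forall x, mul gh (lam_can x) = lam_can (mul gh x)).
  { intros x. symmetry. apply quot_class_mul. }
  intros c d. elim_lam_can c x. elim_lam_can d y. unfold F_rel.
  rewrite !gh_lam, !bet_can_lam_can, !mu_can_pi_can, !ghost_lam_can. split.
  - intros E. apply quot_class_eq in E.
    destruct E as [-> | (Ax & Ay & E)]; [now left | right; now left].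
  - intros [E | [(Ax & Ay & E) | (Zx & Zy)]].
    + now apply lam_can_eq_pi_can_eq.
    + apply quot_class_eq. right. auto.
    + rewrite transmission_gh in Zx, Zy by exact Ta.
      apply gh_faithful in Zx, Zy. apply quot_class_eq. right.
      split; [| split]; [now apply ghost_kernel_zero .. | simpl; now rewrite Zx, Zy].
Qed.

End Canonical.

Theorem theorem2p8 (U V : STM) (alpha : U -> V) :
  transmission alpha -> surj alpha ->
  (exists (X W : STM) (lam : U -> X) (bet : X -> W) (mu : W -> V),
      is_factorization alpha lam bet mu) /\
  (forall (X W X' W' : STM) (lam : U -> X) (bet : X -> W) (mu : W -> V)
          (lam' : U -> X') (bet' : X' -> W') (mu' : W' -> V),
      is_factorization alpha lam bet mu ->
      is_factorization alpha lam' bet' mu' ->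
      exists (rho : X -> X') (rhoinv : X' -> X) (sig : W -> W') (siginv : W' -> W),
        st_iso rho rhoinv /\ st_iso sig siginv /\
        (forall u : U, ghost u -> rho (lam u) = lam' u) /\
        (forall w : W, ghost w -> mu' (sig w) = mu w) /\
        (forall x, lam' x = rho (lam x)) /\
        (forall w', mu' w' = mu (siginv w')) /\
        (forall x', bet' x' = sig (bet (rhoinv x')))) /\
  (exists (X W : STM) (lam : U -> X) (bet : X -> W) (mu : W -> V),
      is_factorization alpha lam bet mu /\
      surj lam /\ kernel_is lam (E_rel (ghost_kernel alpha)) /\
      surj bet /\
      (exists g : X -> V,
          (forall u : U, ghost u -> g (lam u) = alpha u) /\
          kernel_is bet (F_rel g))).
Proof.
  intros Ta Sa.
  pose proof (canonical_factorization alpha Ta Sa) as can.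
  split; [| split].
  - do 5 eexists. exact can.
  - intros X W X' W' lam bet mu lam' bet' mu'. apply factorization_unique.
  - do 5 eexists. split; [exact can |].
    split; [apply quot_class_surj |].
    split; [intros x y; apply quot_class_eq |].
    split; [apply bet_can_surj |].
    eexists. split; [| apply bet_can_kernel].
    intros u _. cbv beta. now rewrite bet_can_lam_can, mu_can_pi_can.
Qed.
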